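(* For all words $a,b,u,v\in\{m_1,\dots,m_{k+1}\}^*$, we have $aub\sim avb$ if and only if $u\sim v$.
   Context: Fix $k\ge 0$. A system of $k$ stacks in series consists of an input queue, stacks $1,\dots,k$, and an output queue. A state records the contents of each stack and each queue (finitely many distinct labelled elements); there is one additional ''illegal'' state $\varnothing$; $\mathcal S_k$ denotes the set of all states including $\varnothing$. The moves are $m_1,\dots,m_{k+1}$: $m_i$ ($1\le i\le k$) pushes an element onto stack $i$, taking it from the front of the input queue if $i=1$ and popping it from the top of stack $i-1$ if $i>1$; $m_{k+1}$ pops the top of stack $k$ and enqueues it at the back of the output queue. For a word $w$ and state $s$, $w\ast s$ is obtained by applying the moves of $w$ left to right, with $w\ast s=\varnothing$ if some move is illegal and $w\ast\varnothing=\varnothing$. For words $x,y$ define $x\sim y$ iff $x\ast s=y\ast s$ for all $s\in\mathcal S_k$. *)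

From mathcomp Require Import all_boot.
Set Implicit Arguments. Unset Strict Implicit. Unset Printing Implicit Defensive.

(* Elements are labelled by nats.
   - inq  : input queue, front = head
   - stks : stacks 1..k (stks`_0 is stack 1), top of each stack = head
   - outq : output queue, back = last element *)
Record config := Config { inq : seq nat; stks : seq (seq nat); outq : seq nat }.

(* A state is [Some c] for a configuration c, or [None] = the illegal state. *)
Definition state := option config.

(* Take the element that move m_{i+1} (0-based index i) moves:
   from the front of the input queue if i = 0, else from the top of stack i
   (0-based stack index i-1). *)
Definition pop_src (i : nat) (c : config) : option (nat * config) :=
  if i is j.+1 then
    match nth [::] (stks c) j with
    | x :: r => Some (x, Config (inq c) (set_nth [::] (stks c) j r) (outq c))
    | [::] => None
    end
  else
    match inq c with
    | x :: r => Some (x, Config r (stks c) (outq c))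
    | [::] => None
    end.

(* Put x at the destination of move m_{i+1}: stack i+1 if i < k,
   else the back of the output queue. *)
Definition push_dst (k i : nat) (x : nat) (c : config) : config :=
  if i < k then Config (inq c) (set_nth [::] (stks c) i (x :: nth [::] (stks c) i)) (outq c)
  else Config (inq c) (stks c) (rcons (outq c) x).

(* Moves m_1, ..., m_{k+1} are represented by i : 'I_k.+1 (m_{i+1}). *)
Definition move (k : nat) (i : 'I_k.+1) (s : state) : state :=
  match s with
  | None => None
  | Some c => match pop_src i c with
              | None => None
              | Some (x, c') => Some (push_dst k i x c')
              end
  end.

Definition act (k : nat) (w : seq 'I_k.+1) (s : state) : state :=
  foldl (fun s i => move i s) s w.

(* Elements of S_k: the illegal state, or a configuration with exactly k
   stacks whose elements are all distinct. *)
Definition valid_state (k : nat) (s : state) : bool :=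
  match s with
  | None => true
  | Some c => (size (stks c) == k) && uniq (inq c ++ flatten (stks c) ++ outq c)
  end.

(* x ~ y iff x * s = y * s for all s in S_k. *)
Definition wequiv (k : nat) (x y : seq 'I_k.+1) : Prop :=
  forall s : state, valid_state k s -> act x s = act y s.

From mathcomp Require Import all_boot zify.
Set Implicit Arguments. Unset Strict Implicit. Unset Printing Implicit Defensive.

(* The backward direction is immediate since words act by composition.  For
   the forward direction we forget the asymmetry between queues and stacks: a
   configuration is a chain of k+2 stacks (input queue, stacks 1..k, reversed
   output queue) and move m_(i+1) carries the top of stack i to stack i+1
   ([chain_of], [act_chain], [wequiv_chain]).  On chains we then argue:
   - if every stack of a chain P is deeper than the total length of a, u, v
     and b, the word a can be run backwards from P to a state T, and u, v, then
     b are legal on P; since runs are injective where legal, the hypothesis at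
     T gives u * P = v * P
     ([cancel_context]);
   - such a deep P is obtained from an arbitrary chain L by placing a block of
     fresh labels beneath each stack; a run on the padded chain mimics the run
     on L as long as the latter is legal, and otherwise moves the top label of
     some block irrevocably upwards; hence u * P = v * P forces u * L = v * L
     ([pad_cancel], [chain_cancel]). *)

Local Notation chain := (seq (seq nat)).

Definition shift (i : nat) (M : chain) : option chain :=
  match drop i M with
  | (x :: r) :: l :: rest => Some (take i M ++ r :: (x :: l) :: rest)
  | _ => None
  end.

Definition unshift (i : nat) (M : chain) : option chain :=
  match drop i M with
  | r :: (x :: l) :: rest => Some (take i M ++ (x :: r) :: l :: rest)
  | _ => None
  end.

Definition run (w : seq nat) (o : option chain) : option chain :=
  foldl (fun o i => obind (shift i) o) o w.

Definition unrun (w : seq nat) (o : option chain) : option chain :=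
  foldr (fun i o => obind (unshift i) o) o w.

Lemma drop_cons2 i (M : chain) y z rest : drop i M = y :: z :: rest ->
  M = take i M ++ y :: z :: rest /\ size (take i M) = i.
Proof.
move=> E; split; first by rewrite -E cat_take_drop.
by apply: size_takel; case: leqP => // /ltnW /drop_oversize; rewrite E.
Qed.

Lemma shift_cat T x r l rest :
  shift (size T) (T ++ (x :: r) :: l :: rest) = Some (T ++ r :: (x :: l) :: rest).
Proof. by rewrite /shift drop_size_cat // take_size_cat. Qed.

Lemma unshift_cat T x r l rest :
  unshift (size T) (T ++ r :: (x :: l) :: rest) = Some (T ++ (x :: r) :: l :: rest).
Proof. by rewrite /unshift drop_size_cat // take_size_cat. Qed.

Lemma shift_empty T rest : shift (size T) (T ++ [::] :: rest) = None.
Proof. by rewrite /shift drop_size_cat. Qed.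

Lemma shiftP i M M' : shift i M = Some M' ->
  exists T x r l rest, [/\ M = T ++ (x :: r) :: l :: rest, size T = i &
                           M' = T ++ r :: (x :: l) :: rest].
Proof.
rewrite /shift; case E: (drop i M) => [|[|x r] [|l rest]] //= [<-].
by have [EM HT] := drop_cons2 E; exists (take i M), x, r, l, rest.
Qed.

Lemma unshiftP i M M' : unshift i M = Some M' ->
  exists T x r l rest, [/\ M = T ++ r :: (x :: l) :: rest, size T = i &
                           M' = T ++ (x :: r) :: l :: rest].
Proof.
rewrite /unshift; case E: (drop i M) => [|r [|[|x l] rest]] //= [<-].
by have [EM HT] := drop_cons2 E; exists (take i M), x, r, l, rest.
Qed.

Lemma shiftK i M M' : shift i M = Some M' -> unshift i M' = Some M.
Proof. by case/shiftP=> T [x [r [l [rest [-> <- ->]]]]]; rewrite unshift_cat. Qed.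

Lemma unshiftK i M M' : unshift i M = Some M' -> shift i M' = Some M.
Proof. by case/unshiftP=> T [x [r [l [rest [-> <- ->]]]]]; rewrite shift_cat. Qed.

Lemma shift_inv i M M' : shift i M = Some M' ->
  size M' = size M /\ perm_eq (flatten M) (flatten M').
Proof.
case/shiftP=> T [x [r [l [rest [-> _ ->]]]]]; split; first by rewrite !size_cat.
by apply/permP=> p; rewrite !flatten_cat !count_cat /= ?count_cat /=; lia.
Qed.

Lemma shift_depth i M M' : shift i M = Some M' -> forall j,
  size (nth [::] M j) <= (size (nth [::] M' j)).+1 /\
  size (nth [::] M' j) <= (size (nth [::] M j)).+1.
Proof.
case/shiftP=> T [x [r [l [rest [-> _ ->]]]]] j; rewrite !nth_cat.
by case: ifP => // _; case: (j - size T) => [|[|d]] //=; lia.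
Qed.

Lemma shift_legal i M : i.+1 < size M -> 0 < size (nth [::] M i) ->
  exists M', shift i M = Some M'.
Proof.
move=> Hi; rewrite /shift (drop_nth [::]) ?(ltnW Hi) // (drop_nth [::]) //.
by case: (nth [::] M i) => // x r _; eexists.
Qed.

Lemma unshift_legal i M : i.+1 < size M -> 0 < size (nth [::] M i.+1) ->
  exists M', unshift i M = Some M'.
Proof.
move=> Hi; rewrite /unshift (drop_nth [::]) ?(ltnW Hi) // (drop_nth [::]) //.
by case: (nth [::] M i.+1) => // x r _; eexists.
Qed.

Lemma run_None w : run w None = None.
Proof. by elim: w. Qed.

Lemma run_cons i w M : run (i :: w) (Some M) = run w (shift i M).
Proof. by []. Qed.

Lemma run_cat w1 w2 o : run (w1 ++ w2) o = run w2 (run w1 o).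
Proof. exact: foldl_cat. Qed.

Lemma runK w M M' : run w (Some M) = Some M' -> unrun w (Some M') = Some M.
Proof.
elim: w M => [|i w IH] M; first by case=> ->.
rewrite run_cons; case E: (shift i M) => [M1|]; last by rewrite run_None.
by move/IH=> /= ->; apply: shiftK.
Qed.

Lemma unrunK w M M' : unrun w (Some M) = Some M' -> run w (Some M') = Some M.
Proof.
elim: w M' => [|i w IH] M' /=; first by case=> ->.
by case: (unrun w (Some M)) IH => [M1|] // IH /unshiftK ->; apply: IH.
Qed.

Lemma run_inj w M1 M2 M : run w (Some M1) = Some M -> run w (Some M2) = Some M -> M1 = M2.
Proof. by move=> /runK E1 /runK; rewrite E1 => -[]. Qed.

Lemma run_inv w M M' : run w (Some M) = Some M' ->
  size M' = size M /\ perm_eq (flatten M) (flatten M').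
Proof.
elim: w M => [|i w IH] M; first by case=> ->.
rewrite run_cons; case E: (shift i M) => [M1|]; last by rewrite run_None.
have [HS HP] := shift_inv E; move/IH=> [-> HP1]; split=> //.
by rewrite (permPl HP).
Qed.

Lemma unrun_inv w M M' : unrun w (Some M) = Some M' ->
  size M' = size M /\ perm_eq (flatten M) (flatten M').
Proof. by move/unrunK/run_inv=> [-> HP]; rewrite perm_sym. Qed.

Definition deep (n : nat) (M : chain) := forall j, j < size M -> n <= size (nth [::] M j).

Lemma deep_le m n M : m <= n -> deep n M -> deep m M.
Proof. by move=> Hmn HM j /HM; apply: leq_trans. Qed.

Lemma deep_shift i M M' n : shift i M = Some M' -> deep n.+1 M -> deep n M'.
Proof.
move=> E HM j; rewrite (proj1 (shift_inv E)) => Hj.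
by have := HM j Hj; have [+ _] := shift_depth E j; lia.
Qed.

Lemma deep_unshift i M M' n : unshift i M = Some M' -> deep n.+1 M -> deep n M'.
Proof.
move=> E HM j; have E' := unshiftK E; rewrite -(proj1 (shift_inv E')) => Hj.
by have := HM j Hj; have [_ +] := shift_depth E' j; lia.
Qed.

Lemma run_legal w M K : all (fun i => i.+1 < size M) w -> deep (size w + K) M ->
  exists M', run w (Some M) = Some M' /\ deep K M'.
Proof.
elim: w M => [|i w IH] M; first by exists M.
case/andP=> Hi Hw HM.
have [M1 E] : exists M1, shift i M = Some M1.
  by apply: shift_legal => //; apply: leq_trans (HM i (ltnW Hi)).
rewrite run_cons E; apply: IH; last exact: deep_shift E HM.
by rewrite (proj1 (shift_inv E)).
Qed.

Lemma unrun_legal w M K : all (fun i => i.+1 < size M) w -> deep (size w + K) M ->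
  exists M', unrun w (Some M) = Some M' /\ deep K M'.
Proof.
elim: w K => [|i w IH] K /=; first by exists M.
case/andP=> Hi Hw HM.
have [|M1 [E1 HM1]] := IH K.+1 Hw; first by rewrite addnS -addSn.
have HS1 := proj1 (unrun_inv E1).
have [M2 E2] : exists M2, unshift i M1 = Some M2.
  by apply: unshift_legal; [rewrite HS1 | apply: leq_trans (HM1 _ _) => //; rewrite HS1].
by exists M2; rewrite E1 /= E2; split=> //; apply: deep_unshift E2 HM1.
Qed.

(* [below j x M] counts the occurrences of the label x in stacks 0..j.  Labels
   only travel towards higher stacks, so it never increases along a run. *)
Definition below (j x : nat) (M : chain) := count_mem x (flatten (take j.+1 M)).

Lemma below_shift i M M' j x : shift i M = Some M' -> below j x M' <= below j x M.
Proof.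
case/shiftP=> T [y [r [l [rest [-> _ ->]]]]]; rewrite /below !take_cat.
case: ifP => // _; case: (j.+1 - size T) => [|[|d]] /=;
  by rewrite !flatten_cat !count_cat /= ?count_cat /=; lia.
Qed.

Lemma below_run w M M' j x : run w (Some M) = Some M' -> below j x M' <= below j x M.
Proof.
elim: w M => [|i w IH] M; first by case=> ->.
rewrite run_cons; case E: (shift i M) => [M1|]; last by rewrite run_None.
by move/IH/leq_trans; apply; apply: below_shift E.
Qed.

(* A run on the
   padded chain either mimics the run on the original chain, or it digs into
   some block, and then the top label of that block leaves its stack for good. *)
Section Padding.

Variable F : nat -> seq nat.

Fixpoint pad_from (j : nat) (L : chain) : chain :=
  if L is l :: L' then (l ++ F j) :: pad_from j.+1 L' else [::].

Definition pad (L : chain) : chain := pad_from 0 L.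

Lemma size_pad_from j L : size (pad_from j L) = size L.
Proof. by elim: L j => //= l L IH j; rewrite IH. Qed.

Lemma pad_from_cat j s t : pad_from j (s ++ t) = pad_from j s ++ pad_from (j + size s) t.
Proof. by elim: s j => [|l s IH] j /=; rewrite ?addn0 // IH addnS. Qed.

Lemma take_pad_from j n L : take n (pad_from j L) = pad_from j (take n L).
Proof. by elim: L j n => [|l L IH] j [|n] //=; rewrite IH. Qed.

Lemma nth_pad_from j L n : n < size L ->
  nth [::] (pad_from j L) n = nth [::] L n ++ F (j + n).
Proof. by elim: L j n => [|l L IH] j [|n] //=; rewrite ?addn0 // => H; rewrite IH // addnS. Qed.

Lemma count_pad_from j L p : count p (flatten (pad_from j L)) =
  count p (flatten L) + count p (flatten [seq F t | t <- iota j (size L)]).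
Proof. by elim: L j => [|l L IH] j //=; rewrite !count_cat IH; lia. Qed.

Lemma pad_from_inj j L1 L2 : pad_from j L1 = pad_from j L2 -> L1 = L2.
Proof.
elim: L1 j L2 => [|l1 L1 IH] j [|l2 L2] //= [E1 E2]; congr (_ :: _); last exact: IH E2.
have Hs : size l1 = size l2 by have := congr1 size E1; rewrite !size_cat; lia.
by rewrite -(take_size_cat (F j) (erefl (size l1))) E1 Hs take_size_cat.
Qed.

Lemma pad_shift i L D : shift i L = Some D -> shift i (pad L) = Some (pad D).
Proof.
case/shiftP=> T [x [r [l [rest [-> <- ->]]]]].
by rewrite /pad !pad_from_cat /= -(size_pad_from 0 T) shift_cat.
Qed.

Lemma below_pad i x D L : size D = size L -> x \notin flatten D -> x \notin flatten L ->
  below i x (pad D) = below i x (pad L).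
Proof.
move=> Hs HD HL; rewrite /below !take_pad_from !count_pad_from !size_take Hs.
have count0 M : x \notin flatten M -> count_mem x (flatten (take i.+1 M)) = 0.
  move=> H; apply/count_memPn; move: H.
  by rewrite -{1}(cat_take_drop i.+1 M) flatten_cat mem_cat negb_or => /andP[].
by rewrite !count0.
Qed.

Hypothesis F_nonempty : forall i, 0 < size (F i).

Lemma pad_shift_fail i L : i.+1 < size L -> shift i L = None ->
  exists Z, shift i (pad L) = Some Z /\
            below i (head 0 (F i)) Z < below i (head 0 (F i)) (pad L).
Proof.
move=> Hi E.
have Hn : nth [::] L i = [::].
  apply/eqP; rewrite -size_eq0 -leqn0 leqNgt; apply/negP => /(shift_legal Hi)[M'].
  by rewrite E.
have HL : L = take i L ++ [::] :: nth [::] L i.+1 :: drop i.+2 L.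
  by rewrite -Hn -!drop_nth ?cat_take_drop // ltnW.
have Ht : size (take i L) = i by rewrite size_takel // ltnW // ltnW.
have := F_nonempty i; case EF: (F i) => [//|s fr] _.
rewrite HL /pad !pad_from_cat /= add0n Ht EF.
rewrite -{-2}Ht -{1}(size_pad_from 0) shift_cat; eexists; split; first by [].
rewrite /below !take_cat !size_pad_from !Ht.
have -> : (i.+1 < i) = false by lia.
by rewrite subSnn /= !flatten_cat !count_cat /= eqxx; lia.
Qed.

Lemma pad_run w L X : all (fun i => i.+1 < size L) w -> run w (Some (pad L)) = Some X ->
  match run w (Some L) with
  | Some D => X = pad D
  | None => exists2 i, i.+1 < size L &
              below i (head 0 (F i)) X < below i (head 0 (F i)) (pad L)
  end.
Proof.
elim: w L => [|i w IH] L; first by move=> _ [<-].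
case/andP=> Hi Hw; rewrite !run_cons.
case E: (shift i L) => [L1|].
  rewrite (pad_shift E) => HX; have Hs := proj1 (shift_inv E).
  have := IH L1; rewrite Hs => /(_ Hw HX).
  case: (run w (Some L1)) => // -[j Hj Hlt]; exists j => //.
  exact: leq_trans Hlt (below_shift _ _ (pad_shift E)).
have [Z [EZ HZ]] := pad_shift_fail Hi E.
rewrite EZ run_None => HX; exists i => //.
exact: leq_ltn_trans (below_run _ _ HX) HZ.
Qed.

(* If u is legal on L and u, v agree on the padded chain, then v is legal on L:
   otherwise v would have lifted the top label x of some block [F i] above
   stack i, whereas in the padding of u * L that label still lies in block i. *)
Lemma pad_legal_transfer u v L X D :
  (forall i, head 0 (F i) \notin flatten L) -> all (fun i => i.+1 < size L) (u ++ v) ->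
  run u (Some L) = Some D ->
  run u (Some (pad L)) = Some X -> run v (Some (pad L)) = Some X ->
  exists D', run v (Some L) = Some D'.
Proof.
move=> Hfresh; rewrite all_cat => /andP[Hu Hv] ED EU EV.
have := pad_run Hv EV; case: (run v (Some L)) => [D'|[i _]]; first by exists D'.
have [HS HP] := run_inv ED.
have := pad_run Hu EU; rewrite ED => ->.
by rewrite (below_pad _ HS) ?ltnn // -(perm_mem HP).
Qed.

Lemma pad_cancel u v L X :
  (forall i, head 0 (F i) \notin flatten L) -> all (fun i => i.+1 < size L) (u ++ v) ->
  run u (Some (pad L)) = Some X -> run v (Some (pad L)) = Some X ->
  run u (Some L) = run v (Some L).
Proof.
move=> Hfresh Huv EU EV.
have Hvu : all (fun i => i.+1 < size L) (v ++ u) by rewrite all_cat andbC -all_cat.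
case Eu: (run u (Some L)) => [Du|]; case Ev: (run v (Some L)) => [Dv|] //.
- move: Huv; rewrite all_cat => /andP[Hu Hv].
  have := pad_run Hu EU; have := pad_run Hv EV; rewrite Eu Ev => -> /pad_from_inj -> //.
- by have [D'] := pad_legal_transfer Hfresh Huv Eu EU EV; rewrite Ev.
- by have [D'] := pad_legal_transfer Hfresh Hvu Ev EV EU; rewrite Eu.
Qed.

End Padding.

(* Cancelling the context on a deep chain P: undo a from P to some T, apply the
   hypothesis at T, and cancel b using injectivity of runs; depth guarantees
   that u and v, followed by b, are legal on P. *)
Lemma cancel_context a u v b P :
  uniq (flatten P) -> all (fun i => i.+1 < size P) (a ++ u ++ v ++ b) ->
  deep (size a + size u + size v + size b) P ->
  (forall M, size M = size P -> uniq (flatten M) ->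
     run (a ++ u ++ b) (Some M) = run (a ++ v ++ b) (Some M)) ->
  exists X, run u (Some P) = Some X /\ run v (Some P) = Some X.
Proof.
move=> HU; rewrite !all_cat => /and4P[Ha Hu Hv Hb] HP H.
have HPa : deep (size a + 0) P by apply: deep_le HP; lia.
have [T [ET _]] := unrun_legal Ha HPa.
have [HsT HpT] := unrun_inv ET.
have HT : run (a ++ u ++ b) (Some T) = run (a ++ v ++ b) (Some T).
  by apply: H; rewrite // -(perm_uniq HpT).
rewrite !run_cat (unrunK ET) in HT.
have run_then_b w : all (fun i => i.+1 < size P) w ->
    size w + size b <= size a + size u + size v + size b ->
    exists X Y, run w (Some P) = Some X /\ run b (Some X) = Some Y.
  move=> Hw Hsz; have [X [EX HX]] := run_legal Hw (deep_le Hsz HP).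
  have [Y [EY _]] : exists Y, run b (Some X) = Some Y /\ deep 0 Y.
    by apply: run_legal; [rewrite (proj1 (run_inv EX)) | rewrite addn0].
  by exists X, Y.
have [Xu [Yu [EXu EYu]]] := run_then_b u Hu (ltac:(lia)).
have [Xv [Yv [EXv EYv]]] := run_then_b v Hv (ltac:(lia)).
rewrite EXu EXv EYu EYv in HT; case: HT => EY; rewrite EY in EYu.
by exists Xu; rewrite EXu EXv (run_inj EYu EYv).
Qed.

Definition blocks (m N t : nat) : seq nat := iota (m + t * N) N.

Lemma flatten_blocks m N j n :
  flatten [seq blocks m N t | t <- iota j n] = iota (m + j * N) (n * N).
Proof.
by elim: n j => [|n IH] j //=; rewrite IH mulSn iotaD; congr (_ ++ iota _ _); lia.
Qed.

Lemma pad_blocks_uniq m N L : uniq (flatten L) -> (forall x, x \in flatten L -> x < m) ->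
  uniq (flatten (pad (blocks m N) L)).
Proof.
move=> HU Hm.
have Hp : perm_eq (flatten (pad (blocks m N) L)) (flatten L ++ iota m (size L * N)).
  by apply/permP=> p; rewrite count_pad_from count_cat flatten_blocks mul0n addn0.
rewrite (perm_uniq Hp) cat_uniq HU iota_uniq andbT /=.
by apply/hasPn=> y; rewrite mem_iota => /andP[Hy _]; apply/negP=> /Hm; lia.
Qed.

Lemma pad_blocks_deep m N L : deep N (pad (blocks m N) L).
Proof.
by move=> j; rewrite size_pad_from => Hj; rewrite nth_pad_from // size_cat size_iota leq_addl.
Qed.

(* Cancellation of contexts for chains: pad L with fresh blocks longer than
   a u v b, cancel the context on the padded chain, then remove the padding. *)
Lemma chain_cancel a u v b L :
  uniq (flatten L) -> all (fun i => i.+1 < size L) (a ++ u ++ v ++ b) ->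
  (forall M, size M = size L -> uniq (flatten M) ->
     run (a ++ u ++ b) (Some M) = run (a ++ v ++ b) (Some M)) ->
  run u (Some L) = run v (Some L).
Proof.
move=> HU Hall H.
pose N := (size a + size u + size v + size b).+1.
pose m := (\max_(x <- flatten L) x).+1.
have Hm x : x \in flatten L -> x < m by move=> Hx; rewrite ltnS leq_bigmax_seq.
have [X [EU EV]] : exists X, run u (Some (pad (blocks m N) L)) = Some X /\
                              run v (Some (pad (blocks m N) L)) = Some X.
  apply: (cancel_context (a := a) (b := b)).
  - exact: pad_blocks_uniq.
  - by rewrite size_pad_from.
  - by apply: (deep_le _ (@pad_blocks_deep m N L)); rewrite /N.
  - by move=> M; rewrite size_pad_from; apply: H.
apply: (pad_cancel _ _ _ EU EV).
- by move=> i; rewrite size_iota.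
- by move=> i; apply/negP=> /Hm; rewrite /blocks /N /=; lia.
- by move: Hall; rewrite !all_cat => /and4P[_ Hu Hv _]; rewrite Hu Hv.
Qed.

Lemma chain_extend n a u v b :
  (forall M, size M = n -> uniq (flatten M) -> run u (Some M) = run v (Some M)) ->
  forall M, size M = n -> uniq (flatten M) ->
    run (a ++ u ++ b) (Some M) = run (a ++ v ++ b) (Some M).
Proof.
move=> H M HM HU; rewrite !run_cat.
case E: (run a (Some M)) => [M'|]; last by rewrite !run_None.
by have [HS HP] := run_inv E; rewrite H // ?HS // -(perm_uniq HP).
Qed.

(* The chain of a configuration: input queue, stacks 1..k, and the output queue
   reversed (its back on top).  Move m_(i+1) then becomes [shift i]. *)
Definition chain_of (c : config) : chain := inq c :: rcons (stks c) (rev (outq c)).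

Definition config_of (k : nat) (M : chain) : config :=
  Config (head [::] M) (take k (behead M)) (rev (last [::] (behead M))).

Lemma size_chain_of c : size (chain_of c) = (size (stks c)).+2.
Proof. by rewrite /chain_of /= size_rcons. Qed.

Lemma chain_of_inj : injective chain_of.
Proof.
case=> q1 s1 o1 [q2 s2 o2]; rewrite /chain_of /= => -[-> /eqP].
by rewrite eqseq_rcons => /andP[/eqP -> /eqP /(can_inj revK) ->].
Qed.

Lemma config_ofK k M : size M = k.+2 -> chain_of (config_of k M) = M.
Proof.
case: M => [|q M] //= [HM]; case/lastP: M HM => [|S y] //; rewrite size_rcons => -[HS].
by rewrite /chain_of /config_of /= last_rcons revK -!cats1 (take_size_cat _ HS).
Qed.

Lemma valid_chain_of k c :
  valid_state k (Some c) = (size (chain_of c) == k.+2) && uniq (flatten (chain_of c)).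
Proof.
have Hp : perm_eq (flatten (chain_of c)) (inq c ++ flatten (stks c) ++ outq c).
  by apply/permP=> p; rewrite /chain_of /= -cats1 flatten_cat !count_cat /= count_rev; lia.
by rewrite size_chain_of eqSS (perm_uniq Hp).
Qed.

Lemma nth_cat_size (T : Type) x0 (s1 s2 : seq T) y n :
  size s1 = n -> nth x0 (s1 ++ y :: s2) n = y.
Proof. by move=> <-; rewrite nth_cat ltnn subnn. Qed.

Lemma set_nth_cat_size (T : Type) x0 (s1 s2 : seq T) y z n :
  size s1 = n -> set_nth x0 (s1 ++ y :: s2) n z = s1 ++ z :: s2.
Proof. by move=> <-; elim: s1 => //= a s1 ->. Qed.

Lemma input_move_chain k c : size (stks c) = k ->
  omap (fun p => chain_of (push_dst k 0 p.1 p.2)) (pop_src 0 c) = shift 0 (chain_of c).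
Proof.
case: c => [[|x r] st o] /= Hs //.
by case: st Hs => [|s0 st] <-; rewrite /push_dst /chain_of //= rev_rcons.
Qed.

Lemma stack_move_chain k j c : j < k -> size (stks c) = k ->
  omap (fun p => chain_of (push_dst k j.+1 p.1 p.2)) (pop_src j.+1 c) = shift j.+1 (chain_of c).
Proof.
case: c => q st o /= Hj Hs.
have [s1 [sj [s2 [Est Hs1]]]] : exists s1 sj s2, st = s1 ++ sj :: s2 /\ size s1 = j.
  exists (take j st), (nth [::] st j), (drop j.+1 st).
  by rewrite -drop_nth ?cat_take_drop ?size_takel ?Hs // ltnW.
subst st j; rewrite /chain_of /= rcons_cat /= (nth_cat_size _ _ _ (erefl _)).
case: sj Hs => [|x r] Hs; first by rewrite (shift_empty (q :: s1)).
rewrite (set_nth_cat_size _ _ _ _ (erefl _)) /push_dst /= -Hs size_cat /=.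
case: s2 Hs => [|l s2] Hs /=.
- by rewrite addn1 ltnn /= rev_rcons rcons_cat (shift_cat (q :: s1)).
- have -> : (size s1).+1 < size s1 + (size s2).+2 by lia.
  have Hr : size (rcons s1 r) = (size s1).+1 by rewrite size_rcons.
  rewrite -cat_rcons (nth_cat_size _ _ _ Hr) (set_nth_cat_size _ _ _ _ Hr) /=.
  by rewrite rcons_cat /= cat_rcons (shift_cat (q :: s1)).
Qed.

Lemma move_chain k (i : 'I_k.+1) c : size (stks c) = k ->
  omap chain_of (move i (Some c)) = shift i (chain_of c).
Proof.
move=> Hs; have <- :
    omap (fun p => chain_of (push_dst k i p.1 p.2)) (pop_src i c) = shift i (chain_of c).
  by case: i => [[|j] Hj]; [apply: input_move_chain | apply: stack_move_chain].
by rewrite /move; case: pop_src => [[]|].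
Qed.

Lemma act_None k (w : seq 'I_k.+1) : act w None = None.
Proof. by elim: w. Qed.

Lemma act_chain k (w : seq 'I_k.+1) c : size (stks c) = k ->
  omap chain_of (act w (Some c)) = run (map val w) (Some (chain_of c)).
Proof.
elim: w c => [|i w IH] c Hs //.
rewrite -[LHS]/(omap chain_of (act w (move i (Some c)))).
rewrite -[RHS]/(run (map val w) (shift i (chain_of c))) -(move_chain i Hs).
case E: (move i (Some c)) => [c1|]; last by rewrite act_None run_None.
apply: IH; have := move_chain i Hs; rewrite E => /esym /shift_inv[+ _].
by rewrite !size_chain_of Hs => -[].
Qed.

Lemma wequiv_chain k (x y : seq 'I_k.+1) : wequiv x y <->
  forall M, size M = k.+2 -> uniq (flatten M) ->
    run (map val x) (Some M) = run (map val y) (Some M).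
Proof.
split=> [H M HM HU | H [c|] Hc]; last by rewrite !act_None.
- have Hc := config_ofK HM.
  have Hs : size (stks (config_of k M)) = k.
    by apply/eqP; rewrite -eqSS -eqSS -size_chain_of Hc HM.
  by rewrite -Hc -!(act_chain _ Hs) H // valid_chain_of Hc HM HU eqxx.
- move: Hc; rewrite valid_chain_of => /andP[/eqP HM HU].
  have Hs : size (stks c) = k by move: HM; rewrite size_chain_of => -[].
  by apply: (inj_omap chain_of_inj); rewrite !act_chain // H.
Qed.

Lemma moves_in_range k (w : seq 'I_k.+1) (M : chain) : size M = k.+2 ->
  all (fun i => i.+1 < size M) (map val w).
Proof. by move=> HM; apply/allP=> n /mapP[i _ ->]; rewrite HM ltnS ltn_ord. Qed.

Theorem lemma3 (k : nat) (a b u v : seq 'I_k.+1) :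
  wequiv (a ++ u ++ b) (a ++ v ++ b) <-> wequiv u v.
Proof.
split=> /wequiv_chain H; apply/wequiv_chain; rewrite ?map_cat in H *.
- move=> M HM HU; apply: (chain_cancel (a := map val a) (b := map val b) HU).
  + by rewrite -!map_cat; apply: moves_in_range.
  + by move=> M'; rewrite HM; apply: H.
- exact: chain_extend.
Qed.
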